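(* Let $\mathcal{A}$ be a clone that admits no minion homomorphism to $\mathcal{P}$. Then there exists a finite graph $\mathbb{G}$ that is not 3-colorable such that $\mathcal{A}$ satisfies $\Sigma_{\mathbb{G}}$.
   Context: A graph is a structure $(V,E)$ with a single symmetric binary relation $E$ (loops allowed); it is 3-colorable if it admits a homomorphism to the complete loopless graph $\mathbb{K}_3$ on three vertices. A clone on a set $A$ is a set of finitary operations on $A$ containing all projections and closed under composition; $\mathcal{P}$ is the clone of projections on $\{0,1\}$. A minion homomorphism between clones $\mathcal{A}\to\mathcal{B}$ is an arity-preserving map $\xi$ such that for all $n$-ary $f\in\mathcal{A}$ and all $\pi:\{1,\dots,n\}\to\{1,\dots,k\}$, $\xi$ maps $(x_1,\dots,x_k)\mapsto f(x_{\pi(1)},\dots,x_{\pi(n)})$ to $(x_1,\dots,x_k)\mapsto \xi(f)(x_{\pi(1)},\dots,x_{\pi(n)})$. A clone satisfies a height 1 condition (finite set of universally quantified identities $f(x_{\pi(1)},\dots,x_{\pi(n)})\approx g(x_{\rho(1)},\dots,x_{\rho(m)})$) if its symbols can be assigned functions of the clone of the right arities making all identities true. For a finite graph $\mathbb{G}=(V,E)$, $\Sigma_{\mathbb{G}}$ is the height 1 condition with a ternary symbol $f_v$ for each $v\in V$, a $6$-ary symbol $g_{(u,v)}$ for each $(u,v)\in E$, and, for each $(u,v)\in E$, the identities $f_u(x,y,z)\approx g_{(u,v)}(x,y,x,z,y,z)$ and $f_v(x,y,z)\approx g_{(u,v)}(y,x,z,x,z,y)$. *)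

From mathcomp Require Import all_boot.
Set Implicit Arguments. Unset Strict Implicit. Unset Printing Implicit Defensive.

Definition op (A : Type) (n : nat) := ('I_n -> A) -> A.

Definition opset (A : Type) := forall n : nat, op A n -> Prop.

Definition is_clone (A : Type) (C : opset A) : Prop :=
  (forall (n : nat) (i : 'I_n), C n (fun x => x i)) /\
  (forall (n m : nat) (f : op A n) (g : 'I_n -> op A m),
      C n f -> (forall i, C m (g i)) -> C m (fun x => f (fun i => g i x))).

Definition minor (A : Type) (n k : nat) (pi : 'I_n -> 'I_k) (f : op A n) : op A k :=
  fun x => f (fun i => x (pi i)).

Definition minion_hom (A B : Type) (C : opset A) (D : opset B)
  (xi : forall n, op A n -> op B n) : Prop :=
  (forall n f, C n f -> D n (xi n f)) /\
  (forall (n k : nat) (pi : 'I_n -> 'I_k) (f : op A n), C n f ->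
     forall x : 'I_k -> B, xi k (minor pi f) x = minor pi (xi n f) x).

Definition proj_clone : opset bool :=
  fun n f => exists i : 'I_n, forall x, f x = x i.

(* A finite graph on vertex set 'I_n: symmetric relation, loops allowed. *)
Definition graph_sym (n : nat) (E : rel 'I_n) : Prop := forall u v, E u v -> E v u.

Definition three_colorable (n : nat) (E : rel 'I_n) : Prop :=
  exists c : 'I_n -> 'I_3, forall u v, E u v -> c u != c v.

Definition tup3 (A : Type) (a b c : A) : 'I_3 -> A :=
  fun i => nth a [:: a; b; c] i.
Definition tup6 (A : Type) (a b c d e f : A) : 'I_6 -> A :=
  fun i => nth a [:: a; b; c; d; e; f] i.

Definition satisfies_SigmaG (A : Type) (C : opset A) (n : nat) (E : rel 'I_n) : Prop :=
  exists (F : 'I_n -> op A 3) (G : 'I_n -> 'I_n -> op A 6),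
    (forall v, C 3 (F v)) /\
    (forall u v, E u v -> C 6 (G u v)) /\
    (forall u v, E u v -> forall x y z : A,
        F u (tup3 x y z) = G u v (tup6 x y x z y z) /\
        F v (tup3 x y z) = G u v (tup6 y x z x z y)).

(* Contrapositive.  Assume every finite graph G with C |= Sigma_G is
   3-colourable.  Join two ternary operations t, t' of C when some 6-ary g
   in C has t(x,y,z) = g(x,y,x,z,y,z) and t'(x,y,z) = g(y,x,z,x,z,y).  The
   finite subgraphs of this infinite graph are graphs G with C |= Sigma_G,
   hence 3-colourable, so by the compactness theorem for colourings (proved
   from Zorn's lemma) the whole graph has a 3-colouring col.  For f in C of
   arity n, s |-> col(f(x_s1, ..., x_sn)) is an n-ary polymorphism of K_3,
   since the Sigma_G identities are realised by a minor of f.  Polymorphisms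
   of K_3 depend on a single coordinate (their decisive sets form an
   ultrafilter, hence a principal one), and mapping f to the projection on
   that coordinate is a minion homomorphism from C to P. *)
From mathcomp Require Import all_boot boolp.
From mathcomp Require classical_sets.
From Stdlib Require List.
Set Implicit Arguments. Unset Strict Implicit. Unset Printing Implicit Defensive.

Definition c0 : 'I_3 := @Ordinal 3 0 isT.
Definition c1 : 'I_3 := @Ordinal 3 1 isT.
Definition c2 : 'I_3 := @Ordinal 3 2 isT.

Lemma colour_cases (x : 'I_3) : [\/ x = c0, x = c1 | x = c2].
Proof.
by case: x => [[|[|[|m]]] Hm] //; [constructor 1|constructor 2|constructor 3];
  apply/val_inj.
Qed.

Lemma third_colour (a b : 'I_3) : a != b ->
  exists c : 'I_3, [/\ c != a, c != b & forall x, [\/ x = a, x = b | x = c]].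
Proof.
case: (colour_cases a) => ->; case: (colour_cases b) => ->; rewrite ?eqxx // => _;
  first [ exists c0; split => // x | exists c1; split => // x | exists c2; split => // x ];
  case: (colour_cases x) => ->; first [by constructor 1 | by constructor 2 | by constructor 3].
Qed.

Lemma finite_ultrafilter_principal (T : finType) (W : {set T} -> Prop) :
  W setT -> (forall S, W (~: S) <-> ~ W S) ->
  (forall S R, W S -> W R -> W (S :&: R)) -> exists i, W [set i].
Proof.
move=> WT Wcompl Wmeet.
suff: forall k (S : {set T}), #|S| = k -> W S -> exists i, W [set i] by move/(_ _ _ erefl WT).
elim=> [|k IH] S cardS WS.
  move/eqP: cardS; rewrite cards_eq0 => /eqP S0.
  by have /Wcompl[] : W (~: setT) by rewrite setCT -S0.
have /card_gt0P[i iS] : 0 < #|S| by rewrite cardS.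
have [Wi|nWi] := EM (W [set i]); first by exists i.
apply: (IH (S :\ i)); last by rewrite setDE; apply: Wmeet => //; apply/Wcompl.
by move: cardS; rewrite (cardsD1 i S) iS add1n => -[].
Qed.

Definition K3_polymorphism (n : nat) (h : ('I_n -> 'I_3) -> 'I_3) : Prop :=
  forall s t : 'I_n -> 'I_3, (forall k, s k != t k) -> h s != h t.

Definition paint (n : nat) (a b : 'I_3) (S : {set 'I_n}) : 'I_n -> 'I_3 :=
  fun k => if k \in S then a else b.

Lemma paintC (n : nat) (a b : 'I_3) (S : {set 'I_n}) : paint a b (~: S) = paint b a S.
Proof. by apply: funext => k; rewrite /paint in_setC; case: (k \in S). Qed.

Section IdempotentPolymorphism.
Variables (n : nat) (h : ('I_n -> 'I_3) -> 'I_3).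
Hypothesis h_poly : K3_polymorphism h.
Hypothesis h_idem : forall a, h (fun _ => a) = a.

Lemma paint_conservative (a b : 'I_3) (S : {set 'I_n}) : a != b -> h (paint a b S) = a \/ h (paint a b S) = b.
Proof.
move=> ab; have [c [ca cb cases]] := third_colour ab.
have : h (paint a b S) != c.
  by rewrite -(h_idem c); apply: h_poly => k; rewrite /paint; case: (k \in S); rewrite eq_sym.
by case: (cases (h (paint a b S))) => ->; [left|right|rewrite eqxx].
Qed.

(* If h follows S with colours (x, y), it also follows S with (x', x):
   the two tuples differ everywhere, so h cannot answer x on both. *)
Lemma paint_follow (x y x' : 'I_3) (S : {set 'I_n}) : x != y -> x' != x ->
  h (paint x y S) = x -> h (paint x' x S) = x'.
Proof.
move=> xy x'x E; have [//|E'] := paint_conservative S x'x.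
have : h (paint x y S) != h (paint x' x S).
  by apply: h_poly => k; rewrite /paint; case: (k \in S); rewrite // eq_sym.
by rewrite E E' eqxx.
Qed.

(* Whether h follows S does not depend on the two colours used: a chain of
   paint_follow steps reaches all six ordered pairs of distinct colours. *)
Lemma paint_colour_free (a b a' b' : 'I_3) (S : {set 'I_n}) : a != b -> a' != b' ->
  h (paint a b S) = a -> h (paint a' b' S) = a'.
Proof.
move=> ab a'b' Eab; have [c [ca cb cases]] := third_colour ab.
have ba : b != a by rewrite eq_sym.
have bc : b != c by rewrite eq_sym.
have ac : a != c by rewrite eq_sym.
have Eca : h (paint c a S) = c by apply: (paint_follow ab ca Eab).
have Ebc : h (paint b c S) = b by apply: (paint_follow ca bc Eca).
have Eba : h (paint b a S) = b by apply: (paint_follow ab ba Eab).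
have Ecb : h (paint c b S) = c by apply: (paint_follow ba cb Eba).
have Eac : h (paint a c S) = a by apply: (paint_follow cb ac Ecb).
by move: a'b'; case: (cases a') => ->; case: (cases b') => ->; rewrite ?eqxx // => _.
Qed.

(* S is decisive when h follows S, i.e. answers c0 on the tuple coloured c0
   on S and c1 off S.  The decisive sets form an ultrafilter on 'I_n. *)
Definition decisive (S : {set 'I_n}) : Prop := h (paint c0 c1 S) = c0.

Lemma decisive_setT : decisive setT.
Proof.
rewrite /decisive -{2}(h_idem c0); congr h.
by apply: funext => k; rewrite /paint in_setT.
Qed.

Lemma decisive_compl (S : {set 'I_n}) : decisive (~: S) <-> ~ decisive S.
Proof.
have follows_iff : h (paint c1 c0 S) = c1 <-> decisive S.
  by split; apply: paint_colour_free.
rewrite -follows_iff /decisive paintC.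
have c01 : c0 <> c1 by move/(congr1 val).
by case: (paint_conservative S (a := c1) (b := c0) isT) => ->; split => // /esym.
Qed.

Lemma decisive_superset (S R : {set 'I_n}) : S \subset R -> decisive S -> decisive R.
Proof.
move=> SR dS; have [E|E] := paint_conservative R (a := c2) (b := c0) isT.
  exact: paint_colour_free E.
have : h (paint c0 c1 S) != h (paint c2 c0 R).
  apply: h_poly => k; rewrite /paint; case kS: (k \in S); first by rewrite (subsetP SR _ kS).
  by case: (k \in R).
by rewrite dS E eqxx.
Qed.

(* Three tuples pairwise differing everywhere would need three distinct
   answers, one of which is excluded when S and R are decisive but S :&: R
   is not. *)
Lemma decisive_meet (S R : {set 'I_n}) : decisive S -> decisive R -> decisive (S :&: R).
Proof.
move=> dS dR; apply: contrapT => /decisive_compl dSR.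
have E1 : h (paint c0 c2 S) = c0 by exact: paint_colour_free dS.
have E2 : h (paint c1 c2 R) = c1 by exact: paint_colour_free dR.
have E3 : h (paint c2 c0 (~: (S :&: R))) = c2 by exact: paint_colour_free dSR.
pose r k := if k \in S then (if k \in R then c2 else c1) else c0.
have H1 : h r != h (paint c0 c2 S).
  by apply: h_poly => k; rewrite /r /paint; case: (k \in S); case: (k \in R).
have H2 : h r != h (paint c1 c2 R).
  by apply: h_poly => k; rewrite /r /paint; case: (k \in S); case: (k \in R).
have H3 : h r != h (paint c2 c0 (~: (S :&: R))).
  by apply: h_poly => k; rewrite /r /paint in_setC in_setI; case: (k \in S); case: (k \in R).
by move: H1 H2 H3; rewrite E1 E2 E3; case: (colour_cases (h r)) => ->; rewrite eqxx.
Qed.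

(* A decisive singleton {i} makes h the i-th projection: otherwise the set
   T of coordinates where s differs from h s is decisive, and the tuple
   painted h s on T and a third colour off T differs from s everywhere. *)
Lemma decisive_projection (i : 'I_n) : decisive [set i] -> forall s, h s = s i.
Proof.
move=> di s; case: (eqVneq (h s) (s i)) => // ne.
have [c [cs ci _]] := third_colour ne.
pose T := [set k | s k != h s].
have dT : decisive T.
  apply: (decisive_superset _ di); apply/subsetP => k; rewrite !inE => /eqP ->.
  by rewrite eq_sym.
have E : h (paint (h s) c T) = h s by apply: (paint_colour_free _ _ dT); rewrite eq_sym.
have : h s != h (paint (h s) c T).
  apply: h_poly => k; rewrite /paint inE.
  by case: (eqVneq (s k) (h s)) => [->|] //=; rewrite eq_sym.
by rewrite E eqxx.
Qed.

Lemma idempotent_polymorphism_projection : exists i, forall s, h s = s i.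
Proof.
have [i di] := finite_ultrafilter_principal decisive_setT decisive_compl decisive_meet.
by exists i; apply: decisive_projection.
Qed.
End IdempotentPolymorphism.

Definition essentially_on (n : nat) (h : ('I_n -> 'I_3) -> 'I_3) (i : 'I_n) : Prop :=
  forall s, h s = h (fun _ => s i).

(* Every polymorphism of K_3 is essentially unary: composing with the inverse
   of the (injective) unary part a |-> h(a,...,a) makes it idempotent. *)
Lemma K3_polymorphism_essentially_unary (n : nat) (h : ('I_n -> 'I_3) -> 'I_3) :
  K3_polymorphism h -> exists i, essentially_on h i.
Proof.
move=> h_poly; pose p a := h (fun _ : 'I_n => a).
have p_inj : injective p by move=> a b; apply: contra_eq => ab; apply: h_poly.
pose h' s := invF p_inj (h s).
have h'_poly : K3_polymorphism h'.
  by move=> s t st; rewrite /h' (can_eq (f_invF p_inj)); apply: h_poly.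
have h'_idem a : h' (fun _ => a) = a by rewrite /h' invF_f.
have [i h'i] := idempotent_polymorphism_projection h'_poly h'_idem.
exists i => s; have := h'i s; rewrite /h' => E.
by rewrite -E; exact: esym (f_invF p_inj (h s)).
Qed.

(* A polymorphism of K_3 is not constant, so its essential coordinate is unique. *)
Lemma essential_coordinate_unique (n : nat) (h : ('I_n -> 'I_3) -> 'I_3) (i j : 'I_n) :
  K3_polymorphism h -> essentially_on h i -> essentially_on h j -> i = j.
Proof.
move=> h_poly hi hj; apply/eqP; apply: contraT => ij.
pose s k := if k == i then c0 else c1.
have si : s i = c0 by rewrite /s eqxx.
have sj : s j = c1 by rewrite /s eq_sym (negbTE ij).
have : h (fun _ => s i) != h (fun _ => s j) by rewrite si sj; apply: h_poly.
by rewrite -hi -hj eqxx.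
Qed.

(* Finite lists of vertices are Stdlib lists (vertices need not have
   decidable equality); this bridges them with seq membership. *)
Lemma mem_In (T : eqType) (x : T) (s : seq T) : x \in s -> List.In x s.
Proof.
by elim: s => //= y s IH; rewrite in_cons => /orP[/eqP ->|/IH]; [left|right].
Qed.

Section Compactness.
Variables (V : Type) (K : finType) (E : V -> V -> Prop).

Definition proper_on (L : seq V) (c : V -> K) : Prop :=
  forall u v, List.In u L -> List.In v L -> E u v -> c u <> c v.

Lemma proper_on_sub (L L' : seq V) (c : V -> K) :
  (forall u, List.In u L -> List.In u L') -> proper_on L' c -> proper_on L c.
Proof. by move=> sub ok u v uL vL; apply: ok; apply: sub. Qed.

Hypothesis finitely_colourable : forall L, exists c : V -> K, proper_on L c.

(* A partial colouring is given by its graph R of (vertex, colour) pairs; it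
   is good when functional and extendable to a proper colouring of every
   finite subgraph. *)
Definition functional (R : V * K -> Prop) : Prop :=
  forall u a b, R (u, a) -> R (u, b) -> a = b.

Definition agrees_on (L : seq V) (c : V -> K) (R : V * K -> Prop) : Prop :=
  forall u a, List.In u L -> R (u, a) -> c u = a.

Definition good (R : V * K -> Prop) : Prop :=
  functional R /\ forall L, exists c, proper_on L c /\ agrees_on L c R.

Let union (F : (V * K -> Prop) -> Prop) : V * K -> Prop :=
  fun p => exists2 X, F X & X p.

Lemma chain_finite_part (F : (V * K -> Prop) -> Prop) (X0 : V * K -> Prop) (L : seq V) :
  classical_sets.total_on F classical_sets.subset -> functional (union F) -> F X0 ->
  exists X, F X /\ forall u a, List.In u L -> union F (u, a) -> X (u, a).
Proof.
move=> tot fU FX0; elim: L => [|v L [X [FX HX]]]; first by exists X0.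
have [[a [Y FY Ya]]|nv] := EM (exists a, union F (v, a)); last first.
  exists X; split => // u b [<-|uL] Ub; last exact: HX.
  by case: nv; exists b.
have [XY|YX] := tot X Y FX FY.
- exists Y; split => // u b [<-|uL] Ub; first by rewrite (fU _ _ _ Ub (ex_intro2 _ _ _ FY Ya)).
  by apply: XY; apply: HX.
- exists X; split => // u b [<-|uL] Ub; last exact: HX.
  by rewrite (fU _ _ _ Ub (ex_intro2 _ _ _ FY Ya)); apply: YX.
Qed.

Lemma chain_union_good (F : (V * K -> Prop) -> Prop) :
  (forall X, F X -> good X) -> classical_sets.total_on F classical_sets.subset ->
  good (union F).
Proof.
move=> Fgood tot.
have fU : functional (union F).
  move=> u a b [X FX Xa] [Y FY Yb]; have [XY|YX] := tot X Y FX FY.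
  - exact: (proj1 (Fgood Y FY)) u a b (XY _ Xa) Yb.
  - exact: (proj1 (Fgood X FX)) u a b Xa (YX _ Yb).
split => // L; have [[X0 FX0]|noF] := EM (exists X, F X).
- have [X [FX HX]] := chain_finite_part L tot fU FX0.
  have [c [cok cX]] := proj2 (Fgood X FX) L.
  by exists c; split => // u a uL Ua; apply: cX => //; apply: HX.
- have [c cok] := finitely_colourable L; exists c; split => // u a _ [X FX _].
  by case: noF; exists X.
Qed.

(* A maximal good partial colouring is total: if vertex v had no colour,
   each colour a would be refuted on some finite list L_a, and a colouring
   agreeing with R on v followed by all the L_a gives v a colour a that is
   not refuted on L_a. *)
Lemma maximal_good_total (R : V * K -> Prop) :
  good R -> (forall R', classical_sets.proper R R' -> ~ good R') ->
  forall v, exists a, R (v, a).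
Proof.
move=> [fR eR] maxR v; apply: contrapT => nv.
pose R_with a (p : V * K) := R p \/ p.1 = v /\ p.2 = a.
have refuted a : exists L, forall c, proper_on L c -> ~ agrees_on L c (R_with a).
  apply: contrapT => nref; apply: (maxR (R_with a)).
    split; first by move=> p Rp; left.
    by move=> sub; apply: nv; exists a; apply: (sub (v, a)); right.
  split.
    move=> u b b' [Rb|/= [-> ->]] [Rb'|/= [eu ->]] //.
    + exact: fR Rb Rb'.
    + by case: nv; exists b; rewrite -eu.
    + by case: nv; exists b'.
  move=> L; apply: contrapT => nc; apply: nref; exists L => c cok cR.
  by apply: nc; exists c.
have [Lof HL] := choice refuted.
pose L := v :: List.flat_map Lof (enum K).
have sub a : forall u, List.In u (Lof a) -> List.In u L.
  move=> u uL; right; apply/List.in_flat_map; exists a; split => //.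
  by apply: mem_In; rewrite mem_enum.
have [c [cok cR]] := eR L.
apply: (HL (c v) c (proper_on_sub (sub (c v)) cok)) => u b uL [Rub|/= [-> ->]] //.
exact: cR (sub _ _ uL) Rub.
Qed.

Lemma compactness : exists c : V -> K, forall u v, E u v -> c u <> c v.
Proof.
have [R [goodR maxR]] : exists R, good R /\ forall R', classical_sets.proper R R' -> ~ good R'.
  by apply: classical_sets.Zorn_bigcup => F Fgood tot; apply: chain_union_good.
have [col Rcol] := choice (maximal_good_total goodR maxR).
exists col => u v Euv; have [c [cok cR]] := proj2 goodR [:: u; v].
have cu : c u = col u by apply: (cR u); [left | exact: Rcol].
have cv : c v = col v by apply: (cR v); [right; left | exact: Rcol].
by rewrite -cu -cv; apply: cok => //; [left | right; left].
Qed.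
End Compactness.

(* The 6-ary patterns (x,y,x,z,y,z) and (y,x,z,x,z,y) of Sigma_G are
   exchanged by a permutation of coordinates. *)
Definition swap6 : 'I_6 -> 'I_6 :=
  tup6 (@Ordinal 6 1 isT) (@Ordinal 6 0 isT) (@Ordinal 6 3 isT)
       (@Ordinal 6 2 isT) (@Ordinal 6 5 isT) (@Ordinal 6 4 isT).

Lemma swap6_patterns (T : Type) (x y z : T) :
  (fun i => tup6 y x z x z y (swap6 i)) = tup6 x y x z y z /\
  (fun i => tup6 x y x z y z (swap6 i)) = tup6 y x z x z y.
Proof. by split; apply: funext => -[[|[|[|[|[|[|m]]]]]] Hm]. Qed.

(* For distinct colours a and b, the coordinate of the 6-ary patterns where
   the first reads the a-th and the second the b-th of x, y, z. *)
Definition pattern_pos (a b : 'I_3) : 'I_6 :=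
  match nat_of_ord a, nat_of_ord b with
  | 0, 1 => @Ordinal 6 0 isT | 1, 0 => @Ordinal 6 1 isT
  | 0, 2 => @Ordinal 6 2 isT | 2, 0 => @Ordinal 6 3 isT
  | 1, 2 => @Ordinal 6 4 isT | 2, 1 => @Ordinal 6 5 isT
  | _, _ => @Ordinal 6 0 isT end.

Lemma pattern_posP (T : Type) (a b : 'I_3) (x y z : T) : a != b ->
  tup6 x y x z y z (pattern_pos a b) = tup3 x y z a /\
  tup6 y x z x z y (pattern_pos a b) = tup3 x y z b.
Proof. by case: (colour_cases a) => ->; case: (colour_cases b) => ->. Qed.

Section TernaryGraph.
Variables (A : Type) (C : opset A).
Arguments C : clear implicits.
Hypothesis C_clone : is_clone C.

Lemma minor_in_clone (n k : nat) (pi : 'I_n -> 'I_k) (f : op A n) :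
  C n f -> C k (minor pi f).
Proof. by move=> Cf; apply: (proj2 C_clone) => // i; apply: (proj1 C_clone). Qed.

Definition sigma_edge (t t' : op A 3) : Prop :=
  exists g, C 6 g /\ forall x y z : A,
    t (tup3 x y z) = g (tup6 x y x z y z) /\ t' (tup3 x y z) = g (tup6 y x z x z y).

Lemma sigma_edge_sym (t t' : op A 3) : sigma_edge t t' -> sigma_edge t' t.
Proof.
move=> [g [Cg Hg]]; exists (minor swap6 g); split; first exact: minor_in_clone.
move=> x y z; have [-> ->] := Hg x y z; rewrite /minor.
by have [-> ->] := swap6_patterns x y z.
Qed.

(* Minors of f along two tuples of colours that differ everywhere are
   sigma-adjacent: the witness sends the k-th variable to the pattern
   coordinate of the pair (s k, t k). *)
Lemma sigma_edge_minors (n : nat) (f : op A n) (s t : 'I_n -> 'I_3) :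
  C n f -> (forall k, s k != t k) -> sigma_edge (minor s f) (minor t f).
Proof.
move=> Cf st; exists (minor (fun k => pattern_pos (s k) (t k)) f).
split; first exact: minor_in_clone.
move=> x y z; rewrite /minor; split; congr f; apply: funext => k;
  by have [E1 E2] := pattern_posP x y z (st k); rewrite ?E1 ?E2.
Qed.

(* The (infinite) graph on the ternary operations of C whose finite
   subgraphs are the graphs G with C satisfying Sigma_G. *)
Definition ternary_graph (t t' : op A 3) : Prop := [/\ C 3 t, C 3 t' & sigma_edge t t'].

Definition family_graph (m : nat) (f : 'I_m -> op A 3) : rel 'I_m :=
  fun i j => `[< sigma_edge (f i) (f j) >].

Lemma family_graph_sym (m : nat) (f : 'I_m -> op A 3) : graph_sym (family_graph f).
Proof. by move=> i j /asboolP /sigma_edge_sym /asboolP. Qed.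

Lemma family_graph_SigmaG (m : nat) (f : 'I_m -> op A 3) :
  (forall i, C 3 (f i)) -> satisfies_SigmaG C (family_graph f).
Proof.
move=> Cf; have witness i j : family_graph f i j ->
    exists g, C 6 g /\ forall x y z : A, f i (tup3 x y z) = g (tup6 x y x z y z) /\
                                        f j (tup3 x y z) = g (tup6 y x z x z y).
  by move/asboolP.
pose first6 : op A 6 := fun x => x ord0.
exists f, (fun i j => if pselect (family_graph f i j) is left e
                     then projT1 (cid (witness i j e)) else first6).
split => //; split => i j e; case: pselect => // e'.
- exact: (proj1 (projT2 (cid (witness i j e')))).
- exact: (proj2 (projT2 (cid (witness i j e')))).
Qed.

Lemma In_nth_ord (T : Type) (d u : T) (L : seq T) :
  List.In u L -> exists i : 'I_(size L), nth d L i = u.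
Proof.
elim: L => //= v L IH [<-|/IH[i Hi]]; first by exists ord0.
by exists (lift ord0 i); rewrite lift0.
Qed.

(* If every finite graph G with C satisfying Sigma_G is 3-colourable, every
   finite subgraph of ternary_graph is 3-colourable: colour the family of
   the listed operations (those outside C replaced by a projection). *)
Lemma finite_subgraphs_colourable :
  (forall m (E : rel 'I_m), graph_sym E -> satisfies_SigmaG C E -> three_colorable E) ->
  forall L : seq (op A 3), exists c : op A 3 -> 'I_3, proper_on ternary_graph L c.
Proof.
move=> colourable L; pose first3 : op A 3 := fun x => x ord0.
have C_first3 : C 3 first3 by apply: (proj1 C_clone).
pose f (i : 'I_(size L)) := if pselect (C 3 (nth first3 L i)) then nth first3 L i else first3.
have Cf i : C 3 (f i) by rewrite /f; case: pselect.
have [c' c'_proper] := colourable _ _ (@family_graph_sym _ f) (family_graph_SigmaG Cf).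
have listed u : List.In u L -> C 3 u -> exists i, f i = u.
  move=> /(In_nth_ord first3)[i <-] Cu; exists i.
  by rewrite /f; case: pselect.
exists (fun u => if pselect (exists i, f i = u) is left e then c' (projT1 (cid e)) else c0).
move=> u v uL vL [Cu Cv uv]; case: pselect => [eu|]; last by case; apply: listed.
case: pselect => [ev|]; last by case; apply: listed.
case: (cid eu) (cid ev) => i fi [j fj] /=; apply/eqP/c'_proper.
by apply/asboolP; rewrite fi fj.
Qed.

Section ColouringToMinionHom.
Variable col : op A 3 -> 'I_3.
Hypothesis col_proper : forall t t', ternary_graph t t' -> col t <> col t'.

Definition colour_pattern (n : nat) (f : op A n) : ('I_n -> 'I_3) -> 'I_3 :=
  fun s => col (minor s f).

Lemma colour_pattern_polymorphism (n : nat) (f : op A n) :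
  C n f -> K3_polymorphism (colour_pattern f).
Proof.
move=> Cf s t st; apply/eqP/col_proper.
by split; [exact: minor_in_clone | exact: minor_in_clone | exact: sigma_edge_minors].
Qed.

Definition coordinate (n : nat) (f : op A n) : option 'I_n :=
  if pselect (exists i, essentially_on (colour_pattern f) i) is left e
  then Some (projT1 (cid e)) else None.

Lemma coordinateP (n : nat) (f : op A n) : C n f ->
  exists i, coordinate f = Some i /\ essentially_on (colour_pattern f) i.
Proof.
move=> Cf; rewrite /coordinate; case: pselect => [e|]; last first.
  by case; apply/K3_polymorphism_essentially_unary/colour_pattern_polymorphism.
by exists (projT1 (cid e)); split => //; exact: projT2 (cid e).
Qed.

Definition to_projection (n : nat) (f : op A n) : op bool n :=
  fun x => if coordinate f is Some i then x i else false.

(* The essential coordinate of a minor f^pi is pi applied to that of f. *)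
Lemma to_projection_minion_hom : minion_hom C proj_clone to_projection.
Proof.
split=> [n f Cf | n k pi f Cf x].
  by have [i [fi _]] := coordinateP Cf; exists i => x; rewrite /to_projection fi.
have [i [fi f_on_i]] := coordinateP Cf.
have [j [fj minor_on_j]] := coordinateP (minor_in_clone pi Cf).
have minor_on_pi : essentially_on (colour_pattern (minor pi f)) (pi i).
  by move=> s; apply: (f_on_i (fun j => s (pi j))).
have j_pi : j = pi i.
  exact: essential_coordinate_unique
    (colour_pattern_polymorphism (minor_in_clone pi Cf)) minor_on_j minor_on_pi.
by rewrite /to_projection /minor fi fj j_pi.
Qed.
End ColouringToMinionHom.
End TernaryGraph.

Theorem lemma3p5 (A : Type) (C : opset A) :
  is_clone C ->
  ~ (exists xi : forall n, op A n -> op bool n, minion_hom C proj_clone xi) ->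
  exists (n : nat) (E : rel 'I_n),
    graph_sym E /\ ~ three_colorable E /\ satisfies_SigmaG C E.
Proof.
move=> C_clone no_hom; apply: contrapT => no_graph.
have colourable m (E : rel 'I_m) :
    graph_sym E -> satisfies_SigmaG C E -> three_colorable E.
  by move=> Esym ESigma; apply: contrapT => Ecol; apply: no_graph; exists m, E.
have [col col_proper] := compactness (finite_subgraphs_colourable C_clone colourable).
by apply: no_hom; exists (to_projection col); apply: to_projection_minion_hom.
Qed.
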